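(* Let $P$ be a $\mathcal{DL}_S$ program. Every Herbrand model $I$ of $P$ is a fixed point of the immediate consequence operator, i.e. $\mathit{IC}_P(I)=I$.
   Context: Fix a set $\mathit{Lit}$ of literals, a set of variables, and relation symbols, each with a fixed arity. Values: $\mathit{Val} ::= R(v_1,\ldots,v_n) \mid \ell$ with $R$ of arity $n$, $v_i\in\mathit{Val}$, $\ell\in\mathit{Lit}$. Facts are values of the form $R(v_1,\ldots,v_n)$ (possibly nested). Terms: $t ::= R(t_1,\ldots,t_n)\mid x \mid \ell$, $x$ a variable. A $\mathcal{DL}_S$ rule $R$ has a head clause $\mathit{Head}(R)=Q(t_1,\ldots,t_n)$ and a finite set $\mathit{Body}(R)$ of body clauses of the form $\mathit{id}=Q(t_1,\ldots,t_n)$ ($\mathit{id}$ a variable naming the matched fact); every head variable occurs in the body. A program $P$ is a finite set of rules. A substitution $\sigma$ maps variables to values; for a set of facts $I$, $\mathit{Body}(R)\sigma\subseteq I$ means that for each body clause $\mathit{id}=Q(\vec t)$, $Q(\vec t)\sigma\in I$ and $\sigma(\mathit{id})=Q(\vec t)\sigma$. $\mathit{subfact}(R(v_1,\ldots,v_n))=\{R(v_1,\ldots,v_n)\}\cup\bigcup_i\mathit{subfact}(v_i)$, $\mathit{subfact}(\ell)=\emptyset$ for literals; a set of facts $I$ is subfact-closed if $I=\bigcup\{\mathit{subfact}(f)\mid f\in I\}$. A database is a set of facts. $\mathit{IC}_R(\mathit{db})=\mathit{db}\cup\bigcup\{\mathit{subfact}(\mathit{Head}(R)\sigma)\mid \mathit{Body}(R)\sigma\subseteq\mathit{db}\}$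 and $\mathit{IC}_P(\mathit{db})=\mathit{db}\cup\bigcup_{R\in P}\mathit{IC}_R(\mathit{db})$. The Herbrand universe of $P$ is the set of all facts constructible from the relation symbols appearing in $P$ (and literals). A Herbrand interpretation is a subfact-closed subset $I$ of the Herbrand universe. $I\models R$ iff for every substitution $\sigma$, $\mathit{Body}(R)\sigma\subseteq I$ implies $\mathit{Head}(R)\sigma\in I$. A Herbrand model of $P$ is a Herbrand interpretation in which every rule of $P$ is true. *)

From Stdlib Require Import List.
Import ListNotations.
Set Implicit Arguments.

Section DLS.
Variables (Lit Var Rel : Type) (arity : Rel -> nat).

Inductive Val : Type :=
| VRel : Rel -> list Val -> Val
| VLit : Lit -> Val.

Inductive Term : Type :=
| TRel : Rel -> list Term -> Term
| TVar : Var -> Term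
| TLit : Lit -> Term.

Fixpoint wf_val (v : Val) : Prop :=
  match v with
  | VRel R vs => length vs = arity R /\
      (fix go (l : list Val) : Prop :=
         match l with [] => True | w :: l' => wf_val w /\ go l' end) vs
  | VLit _ => True
  end.

Fixpoint wf_term (t : Term) : Prop :=
  match t with
  | TRel R ts => length ts = arity R /\
      (fix go (l : list Term) : Prop :=
         match l with [] => True | u :: l' => wf_term u /\ go l' end) ts
  | TVar _ => True
  | TLit _ => True
  end.

Definition is_fact (v : Val) : Prop := exists R vs, v = VRel R vs.

Fixpoint subfact (v : Val) (f : Val) : Prop :=
  match v with
  | VRel R vs => f = v \/
      (fix go (l : list Val) : Prop :=
         match l with [] => False | w :: l' => subfact w f \/ go l' end) vs
  | VLit _ => False
  end.

Record Clause := mkClause { cl_rel : Rel; cl_args : list Term }.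
Definition clause_term (c : Clause) : Term := TRel (cl_rel c) (cl_args c).

(* A body clause  id = Q(t1,...,tn) *)
Record BodyClause := mkBodyClause { bc_id : Var; bc_clause : Clause }.

Record Rule := mkRule { head : Clause; body : list BodyClause }.

Definition Program := list Rule.

Fixpoint var_in_term (x : Var) (t : Term) : Prop :=
  match t with
  | TRel _ ts =>
      (fix go (l : list Term) : Prop :=
         match l with [] => False | u :: l' => var_in_term x u \/ go l' end) ts
  | TVar y => x = y
  | TLit _ => False
  end.

Definition var_in_body (x : Var) (r : Rule) : Prop :=
  exists bc, In bc (body r) /\
    (x = bc_id bc \/ var_in_term x (clause_term (bc_clause bc))).

Definition wf_rule (r : Rule) : Prop :=
  wf_term (clause_term (head r)) /\
  (forall bc, In bc (body r) -> wf_term (clause_term (bc_clause bc))) /\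
  (forall x, var_in_term x (clause_term (head r)) -> var_in_body x r).

Definition wf_program (P : Program) : Prop := forall r, In r P -> wf_rule r.

Definition Subst := Var -> Val.
Definition wf_subst (s : Subst) : Prop := forall x, wf_val (s x).

Fixpoint apply_subst (s : Subst) (t : Term) : Val :=
  match t with
  | TRel R ts => VRel R (map (apply_subst s) ts)
  | TVar x => s x
  | TLit l => VLit l
  end.

Definition inst (s : Subst) (c : Clause) : Val := apply_subst s (clause_term c).

Definition body_in (r : Rule) (s : Subst) (I : Val -> Prop) : Prop :=
  forall bc, In bc (body r) ->
    I (inst s (bc_clause bc)) /\ s (bc_id bc) = inst s (bc_clause bc).

Definition IC_R (r : Rule) (db : Val -> Prop) : Val -> Prop :=
  fun f => db f \/
    exists s, wf_subst s /\ body_in r s db /\ subfact (inst s (head r)) f.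

Definition IC_P (P : Program) (db : Val -> Prop) : Val -> Prop :=
  fun f => db f \/ exists r, In r P /\ IC_R r db f.

Fixpoint rel_in_term (Q : Rel) (t : Term) : Prop :=
  match t with
  | TRel R ts => Q = R \/
      (fix go (l : list Term) : Prop :=
         match l with [] => False | u :: l' => rel_in_term Q u \/ go l' end) ts
  | TVar _ => False
  | TLit _ => False
  end.

Definition rel_in_program (P : Program) (Q : Rel) : Prop :=
  exists r, In r P /\
    (rel_in_term Q (clause_term (head r)) \/
     exists bc, In bc (body r) /\ rel_in_term Q (clause_term (bc_clause bc))).

Fixpoint built_from (ok : Rel -> Prop) (v : Val) : Prop :=
  match v with
  | VRel R vs => ok R /\
      (fix go (l : list Val) : Prop :=
         match l with [] => True | w :: l' => built_from ok w /\ go l' end) vs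
  | VLit _ => True
  end.

Definition herbrand_universe (P : Program) (f : Val) : Prop :=
  is_fact f /\ wf_val f /\ built_from (rel_in_program P) f.

Definition subfact_closed (I : Val -> Prop) : Prop :=
  forall f, I f <-> exists g, I g /\ subfact g f.

Definition herbrand_interpretation (P : Program) (I : Val -> Prop) : Prop :=
  (forall f, I f -> herbrand_universe P f) /\ subfact_closed I.

Definition satisfies (I : Val -> Prop) (r : Rule) : Prop :=
  forall s, wf_subst s -> body_in r s I -> I (inst s (head r)).

Definition herbrand_model (P : Program) (I : Val -> Prop) : Prop :=
  herbrand_interpretation P I /\ forall r, In r P -> satisfies I r.

End DLS.

(** Every new fact [IC_P] derives from a model [I] is a subfact of an
    instantiated head [Head(R)σ] whose body holds in [I]; since [I] satisfies
    [R], that head already lies in [I], and subfact-closure puts all its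
    subfacts in [I] as well. The reverse inclusion holds for any database. *)

From Stdlib Require Import List FunctionalExtensionality PropExtensionality.

Section ImmediateConsequence.
Context {Lit Var Rel : Type} {arity : Rel -> nat} {I : Val Lit Rel -> Prop}.
Hypothesis I_closed : subfact_closed I.

Lemma IC_R_sub_model {r : Rule Lit Var Rel} :
  satisfies arity I r -> forall f, IC_R arity r I f -> I f.
Proof.
  intros Hr f [If | [s [Hs [Hbody Hsub]]]]; [exact If |].
  apply I_closed.
  exists (inst s (head r)); split; [exact (Hr s Hs Hbody) | exact Hsub].
Qed.

Lemma IC_P_sub_model {P : Program Lit Var Rel} :
  (forall r, In r P -> satisfies arity I r) -> forall f, IC_P arity P I f -> I f.
Proof.
  intros HP f [If | [r [Hr HRf]]]; [exact If |].
  exact (IC_R_sub_model (HP r Hr) f HRf).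
Qed.

End ImmediateConsequence.

Theorem mainTheorem3 (Lit Var Rel : Type) (arity : Rel -> nat)
  (P : Program Lit Var Rel) (HP : wf_program arity P)
  (I : Val Lit Rel -> Prop) (HI : herbrand_model arity P I) :
  IC_P arity P I = I.
Proof.
  destruct HI as [[_ I_closed] I_sat].
  apply functional_extensionality; intro f.
  apply propositional_extensionality; split.
  - exact (IC_P_sub_model I_closed I_sat f).
  - intro If; left; exact If.
Qed.
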